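(* For every $d\ge1$ and every unlabeled pool $S_u\subseteq\mathbb{R}_+^d$ of size $m$, the auditing complexity of $S_u$ with respect to $\mathcal{H}_\Box$ is at most $d$.
   Context: For $\mathbf a\in\mathbb{R}_+^d$, $h_{\mathbf a}(x)=2\mathbb{I}[\exists i\in[d],\ x[i]\ge a[i]]-1$, and $\mathcal{H}_\Box=\{h_{\mathbf a}:\mathbf a\in\mathbb{R}_+^d\}$ (points outside the ''rectangle'' are positive). The auditing complexity of a finite unlabeled pool $S_u$ with respect to a class $\mathcal{H}$ is the minimum, over algorithms that sequentially query labels of points of $S_u$ and that for every labeling of $S_u$ consistent with some $h\in\mathcal{H}$ output (with probability 1) a hypothesis with zero error on the labeled pool, of the worst case (over such labelings) number of queried points whose label is $-1$. *)

From mathcomp Require Import all_boot all_order all_algebra.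
From mathcomp Require Import reals.
Set Implicit Arguments. Unset Strict Implicit. Unset Printing Implicit Defensive.
Import Order.TTheory GRing.Theory Num.Theory.
Local Open Scope ring_scope.

Section Auditing.
Variables (R : realType) (d : nat).

(* points of R^d are functions 'I_d -> R; labels are integers in {-1,+1} *)
Definition point := 'I_d -> R.
Definition hypothesis := point -> int.

Definition h_box (a : point) : hypothesis :=
  fun x => 2 * ((([exists i, a i <= x i] : bool) : nat)%:Z) - 1.

Definition H_box : hypothesis -> Prop :=
  fun h => exists a : point, (forall i, 0 <= a i) /\ h = h_box a.

Variable m : nat.

(* A (deterministic, adaptive) auditing algorithm on a pool indexed by 'I_m:
   given the history of (queried index, revealed label) pairs, it either
   queries a further pool point (Some i) or stops (None) and outputs a
   hypothesis computed from the history. *)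
Record algorithm := Algorithm {
  next_query : seq ('I_m * int) -> option 'I_m;
  output : seq ('I_m * int) -> hypothesis }.

Fixpoint exec (A : algorithm) (L : 'I_m -> int) (fuel : nat)
    (hist : seq ('I_m * int)) : option (seq ('I_m * int)) :=
  match fuel with
  | 0 => None
  | fuel'.+1 =>
      match next_query A hist with
      | None => Some hist
      | Some i => exec A L fuel' (rcons hist (i, L i))
      end
  end.

Definition stops (A : algorithm) (L : 'I_m -> int) (hist : seq ('I_m * int)) :=
  exists fuel, exec A L fuel [::] = Some hist.

Definition consistent (H : hypothesis -> Prop) (S : 'I_m -> point)
    (L : 'I_m -> int) := exists h, H h /\ forall j, L j = h (S j).

Definition audits (H : hypothesis -> Prop) (S : 'I_m -> point) (A : algorithm) :=
  forall L, consistent H S L ->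
    exists hist, stops A L hist /\ forall j, output A hist (S j) = L j.

Definition neg_queries (L : 'I_m -> int) (hist : seq ('I_m * int)) : nat :=
  #|[pred j : 'I_m | (j \in [seq p.1 | p <- hist]) && (L j == -1)]|.

(* "auditing complexity of S w.r.t. H is at most k": the minimum over valid
   algorithms of the worst-case number of negative queries is <= k, i.e.
   some valid algorithm has worst case <= k. *)
Definition auditing_complexity_le (H : hypothesis -> Prop) (S : 'I_m -> point)
    (k : nat) :=
  exists A, audits H S A /\
    forall L, consistent H S L ->
      forall hist, stops A L hist -> (neg_queries L hist <= k)%N.

End Auditing.

From mathcomp Require Import all_boot all_order all_algebra.
From mathcomp Require Import reals.
Import Order.TTheory GRing.Theory Num.Theory.
Local Open Scope ring_scope.
Set Implicit Arguments. Unset Strict Implicit.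

(* The auditor repeatedly picks, over all coordinates i, an unqueried point
   whose i-th coordinate is largest among those exceeding the i-th coordinate
   of every negative found so far, and stops when there is none; it then
   declares x negative iff in every coordinate some negative dominates x. The bound d holds
   because two negatives are never queried through the same coordinate i: the
   first one was the maximum of the candidates in coordinate i, and any later
   candidate in coordinate i must exceed it although it was already a
   candidate back then. *)

Definition queried (I : Type) (hist : seq (I * int)) : seq I :=
  [seq p.1 | p <- hist].

Lemma subset_take (T : eqType) (s : seq T) k1 k2 :
  (k1 <= k2)%N -> {subset take k1 s <= take k2 s}.
Proof. by move=> le x; rewrite -(take_takel s le) => /mem_take. Qed.

Section Runs.
Variables (R : realType) (d m : nat) (A : algorithm R d m) (L : 'I_m -> int).

Definition is_trace (hist : seq ('I_m * int)) :=
  forall h1 p h2, hist = h1 ++ p :: h2 ->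
    next_query A h1 = Some p.1 /\ p.2 = L p.1.

Lemma is_trace_nil : is_trace [::].
Proof. by move=> [|? ?] ? ?. Qed.

Lemma is_trace_rcons hist i : is_trace hist -> next_query A hist = Some i ->
  is_trace (rcons hist (i, L i)).
Proof.
move=> tr qi h1 p; case/lastP => [|h2 q].
  by rewrite cats1 => /rcons_inj [<- <-].
by rewrite -rcons_cons -rcons_cat => /rcons_inj [/tr].
Qed.

Lemma exec_trace fuel h hist : is_trace h -> exec A L fuel h = Some hist ->
  is_trace hist /\ next_query A hist = None.
Proof.
elim: fuel h => [//|n IH] h tr /=.
case qh: (next_query A h) => [i|]; last by case=> <-.
by apply: IH; apply: is_trace_rcons.
Qed.

Lemma trace_label hist p : is_trace hist -> p \in hist -> p.2 = L p.1.
Proof.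
by move=> /[swap] /splitPr [h1 h2] /(_ h1 p h2 erefl) [].
Qed.

Lemma trace_query hist j : is_trace hist -> j \in queried hist ->
  let k := index j (queried hist) in
  next_query A (take k hist) = Some j /\ (j, L j) \in take k.+1 hist.
Proof.
move=> tr jq k.
have kl : (k < size hist)%N by rewrite -(size_map fst) index_mem.
have pj : (nth (j, 0) hist k).1 = j.
  by rewrite -(nth_map (j, 0) j fst kl) nth_index.
have def_hist : hist = take k hist ++ nth (j, 0) hist k :: drop k.+1 hist.
  by rewrite -drop_nth // cat_take_drop.
have [qk lk] := tr _ _ _ def_hist.
have pjL : nth (j, 0) hist k = (j, L j).
  by move: pj lk; case: (nth _ _ _) => a b /= -> ->.
by rewrite qk pj (take_nth (j, 0) kl) pjL mem_rcons mem_head.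
Qed.

Lemma trace_mem_queried hist j : is_trace hist -> j \in queried hist ->
  (j, L j) \in hist.
Proof.
by move=> tr /mapP [p ph ->]; rewrite -(trace_label tr ph) -surjective_pairing.
Qed.

Lemma exec_terminates n h :
  (forall h' i, next_query A h' = Some i -> i \notin queried h') ->
  (#|[pred j | j \notin queried h]| < n)%N ->
  exists hist, exec A L n h = Some hist.
Proof.
move=> fresh; elim: n h => [//|n IH] h /=.
case qh: (next_query A h) => [i|]; last by exists h.
rewrite (cardD1 i) inE (fresh _ _ qh) add1n ltnS => lt.
apply: IH; apply: leq_trans lt; apply/subset_leq_card/subsetP => j.
by rewrite !inE /queried map_rcons mem_rcons in_cons negb_or.
Qed.

End Runs.

Lemma auditing_complexity_le_trace (R : realType) (d m k : nat)
    (H : hypothesis R d -> Prop) (S : 'I_m -> point R d) (A : algorithm R d m) :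
  (forall h i, next_query A h = Some i -> i \notin queried h) ->
  (forall L, consistent H S L -> forall hist, is_trace A L hist ->
     next_query A hist = None -> forall j, output A hist (S j) = L j) ->
  (forall L hist, is_trace A L hist -> (neg_queries L hist <= k)%N) ->
  auditing_complexity_le H S k.
Proof.
move=> fresh correct bound; exists A; split=> [L cL|L _ hist [fuel ex]].
  have [hist ex] : exists hist, exec A L m.+1 [::] = Some hist.
    apply: exec_terminates fresh _.
    by rewrite ltnS (leq_trans (max_card _)) ?card_ord.
  have [tr stop] := exec_trace (is_trace_nil A L) ex.
  by exists hist; split; [exists m.+1 | exact: correct].
by apply: bound; have [] := exec_trace (is_trace_nil A L) ex.
Qed.

Lemma h_boxE (R : realType) (d : nat) (a x : point R d) :
  h_box a x = if [exists i, a i <= x i] then 1 else -1.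
Proof. by rewrite /h_box; case: [exists i, _]. Qed.

Lemma h_box_eqN1 (R : realType) (d : nat) (a x : point R d) :
  h_box a x = -1 <-> forall i, x i < a i.
Proof.
rewrite h_boxE; case: existsP => [[i le] | above]; split=> //.
  by move=> /(_ i); rewrite ltNge le.
by move=> _ i; rewrite ltNge; apply/negP => le; apply: above; exists i.
Qed.

Section BoxAuditor.
Variables (R : realType) (d m : nat) (S : 'I_m -> 'I_d -> R).

Definition negatives (hist : seq ('I_m * int)) : seq 'I_m :=
  [seq p.1 | p <- hist & p.2 == -1].

Definition candidate hist (i : 'I_d) (j : 'I_m) : bool :=
  (j \notin queried hist) && all (fun n => S n i < S j i) (negatives hist).

Definition best_query hist : option ('I_d * 'I_m) :=
  [pick p : 'I_d * 'I_m | candidate hist p.1 p.2 &&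
     [forall j, candidate hist p.1 j ==> (S j p.1 <= S p.2 p.1)]].

Definition box_output hist : hypothesis R d :=
  fun x => if [forall i, has (fun n => x i <= S n i) (negatives hist)]
           then -1 else 1.

Definition box_auditor : algorithm R d m :=
  Algorithm (fun hist => omap snd (best_query hist)) box_output.

Lemma mem_negatives hist n : (n \in negatives hist) = ((n, -1) \in hist).
Proof.
apply/mapP/idP => [[p] | nh]; last by exists (n, -1); rewrite ?mem_filter.
by rewrite mem_filter => /andP [/eqP p2 ph] ->; rewrite -p2 -surjective_pairing.
Qed.

Lemma candidate_antitone hist hist' i j : {subset hist <= hist'} ->
  candidate hist' i j -> candidate hist i j.
Proof.
move=> sub /andP [jq /allP below]; apply/andP; split.
  by apply: contra jq; apply: sub_map.
by apply/allP => n; rewrite mem_negatives => /sub; rewrite -mem_negatives;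
  apply: below.
Qed.

Lemma best_querySome hist i j : best_query hist = Some (i, j) ->
  candidate hist i j /\ forall j', candidate hist i j' -> S j' i <= S j i.
Proof.
rewrite /best_query; case: pickP => // -[i' j'] /andP [c /forallP top] [<- <-].
by split=> // k; apply/implyP/top.
Qed.

Lemma best_queryNone hist i j : best_query hist = None -> ~~ candidate hist i j.
Proof.
move=> none; apply/negP => cj.
have [j' cj' top] := arg_maxP (fun j => S j i) cj.
move: none; rewrite /best_query; case: pickP => // /(_ (i, j')) /=.
rewrite cj' /= => /negbT/negP + _; apply.
by apply/forallP => k; apply/implyP/top.
Qed.

Lemma box_auditor_fresh hist j :
  next_query box_auditor hist = Some j -> j \notin queried hist.
Proof.
rewrite /=; case bq: best_query => [[i j']|] //= [<-].
by have [/andP []] := best_querySome bq.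
Qed.

Lemma best_query_coord_once hist hist' i ja jb :
  {subset hist <= hist'} -> (ja, -1) \in hist' ->
  best_query hist = Some (i, ja) -> best_query hist' = Some (i, jb) -> False.
Proof.
move=> sub ja_neg bq bq'.
have [_ top] := best_querySome bq.
have [cb _] := best_querySome bq'.
have [_ /allP above] := andP cb.
have := above ja; rewrite mem_negatives => /(_ ja_neg).
by rewrite ltNge top // (candidate_antitone sub cb).
Qed.

Lemma box_trace_query L hist j : is_trace box_auditor L hist ->
  j \in queried hist -> let k := index j (queried hist) in
  exists i, best_query (take k hist) = Some (i, j) /\
    (j, L j) \in take k.+1 hist.
Proof.
move=> tr jq k; have [/= qk jk] := trace_query tr jq.
by move: qk; case: best_query => [[i j']|] //= [->]; exists i.
Qed.

Lemma neg_queries_box_auditor (i0 : 'I_d) L hist :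
  is_trace box_auditor L hist -> (neg_queries L hist <= d)%N.
Proof.
move=> tr; pose k j := index j (queried hist).
pose coord j := odflt i0 (omap fst (best_query (take (k j) hist))).
rewrite /neg_queries -[leqRHS](card_ord d).
apply: (leq_card_in coord) => j1 j2 /andP [j1q /eqP l1] /andP [j2q /eqP l2].
have [i1 [bq1 in1]] := box_trace_query tr j1q.
have [i2 [bq2 in2]] := box_trace_query tr j2q.
rewrite /coord bq1 bq2 /= => ei; subst i2.
have once ka kb ja jb : (ka < kb)%N -> L ja = -1 ->
    (ja, L ja) \in take ka.+1 hist ->
    best_query (take ka hist) = Some (i1, ja) ->
    best_query (take kb hist) = Some (i1, jb) -> False.
  move=> lt la ina; apply: best_query_coord_once.
    exact: subset_take (ltnW lt).
  by rewrite -la; apply: subset_take ina.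
case: (ltngtP (k j1) (k j2)) => [lt|lt|e].
- by case: (once _ _ _ _ lt l1 in1 bq1 bq2).
- by case: (once _ _ _ _ lt l2 in2 bq2 bq1).
- by move: bq1; rewrite -/(k j1) e -/(k j2) bq2 => -[].
Qed.

Lemma box_output_correct L hist : consistent (@H_box R d) S L ->
  is_trace box_auditor L hist -> next_query box_auditor hist = None ->
  forall j, box_output hist (S j) = L j.
Proof.
move=> [_ [[a [_ ->]] hL]] tr stop j.
have below_a n i : n \in negatives hist -> S n i < a i.
  rewrite mem_negatives => /(trace_label tr) /= /esym.
  by rewrite hL => /h_box_eqN1.
have no_cand i j' : ~~ candidate hist i j'.
  by apply: best_queryNone; move: stop => /=; case: best_query.
rewrite hL h_boxE /box_output; case: existsP => [[i ai] | inside].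
  case: forallP => // /(_ i) /hasP [n /(below_a _ i) na le].
  by move: na; rewrite ltNge (le_trans ai le).
have Lj : L j = -1 by rewrite hL h_boxE; case: existsP => // /inside.
suff -> : [forall i, has (fun n => S j i <= S n i) (negatives hist)] by [].
apply/forallP => i; case jq: (j \in queried hist).
  by apply/hasP; exists j; rewrite ?mem_negatives -?Lj ?(trace_mem_queried tr).
move: (no_cand i j); rewrite /candidate jq /= -has_predC.
by apply: sub_has => n /=; rewrite -leNgt.
Qed.

End BoxAuditor.

Theorem theorem3 (R : realType) (d m : nat) (hd : (1 <= d)%N)
    (S : 'I_m -> 'I_d -> R) (hS : forall j i, 0 <= S j i) :
  auditing_complexity_le (@H_box R d) S d.
Proof.
apply: (auditing_complexity_le_trace (A := box_auditor S)).
- exact: box_auditor_fresh.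
- move=> L cL hist tr stop j; exact: box_output_correct cL tr stop j.
- exact: neg_queries_box_auditor (Ordinal hd).
Qed.
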